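(* Let $X$ be a real Banach space with $\dim X\ge 2$. Then $S_P(X)<\tfrac12$ if and only if $X$ is uniformly non-square.
   Context: For a real Banach space $X$ with unit sphere $S_X$, the P-angle constant is $S_P(X)=\sup\left\{\frac{\|x+y\|^2+\|x-y\|^2-4}{2\|x+y\|\,\|x-y\|}: x,y\in S_X,\ x\neq \pm y\right\}$. $X$ is uniformly non-square if there exists $\delta\in(0,1)$ such that for all $x,y\in S_X$, either $\frac{\|x-y\|}{2}\le 1-\delta$ or $\frac{\|x+y\|}{2}\le 1-\delta$. *)

From HB Require Import structures.
From mathcomp Require Import all_boot all_order all_algebra.
From mathcomp Require Import all_classical all_reals all_analysis.
Set Implicit Arguments. Unset Strict Implicit. Unset Printing Implicit Defensive.
Import Order.TTheory GRing.Theory Num.Theory.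
Import numFieldNormedType.Exports.
Local Open Scope classical_set_scope.
Local Open Scope ring_scope.

Definition unit_sphere (R : realType) (X : normedModType R) : set X :=
  [set x | `|x| = 1].

Definition SP_values (R : realType) (X : normedModType R) : set R :=
  [set t | exists x y : X, [/\ `|x| = 1, `|y| = 1, x != y, x != - y &
      t = (`|x + y| ^+ 2 + `|x - y| ^+ 2 - 4) / (2 * `|x + y| * `|x - y|)]].

Definition SP_const (R : realType) (X : normedModType R) : \bar R :=
  ereal_sup [set t%:E | t in SP_values X].

Definition uniformly_non_square (R : realType) (X : normedModType R) : Prop :=
  exists delta : R, 0 < delta < 1 /\
    forall x y : X, `|x| = 1 -> `|y| = 1 ->
      `|x - y| / 2 <= 1 - delta \/ `|x + y| / 2 <= 1 - delta.

Definition dim_ge2 (R : realType) (X : normedModType R) : Prop :=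
  exists x y : X, forall a b : R, a *: x + b *: y = 0 -> a = 0 /\ b = 0.

From HB Require Import structures.
From mathcomp Require Import all_boot all_order all_algebra.
From mathcomp Require Import all_classical all_reals all_analysis.
From mathcomp Require Import lra.
Import Order.TTheory GRing.Theory Num.Theory.
Import numFieldNormedType.Exports.
Local Open Scope classical_set_scope.
Local Open Scope ring_scope.

(** For unit vectors x, y write a = |x + y| and b = |x - y|; then 0 < a, b <= 2
    and a + b >= 2, and the P-angle quotient is q(a, b) = (a^2 + b^2 - 4) / 2ab.
    If one of a, b is at most 2 - 2d, then q(a, b) <= (1 - d) / 2, so uniform
    non-squareness bounds S_P(X) by (1 - d) / 2 < 1/2.  Conversely, if both
    a, b exceed c >= 3/2 then q(a, b) > (c^2 - 2) / 4 >= c - 3/2, and this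
    lower bound tends to 1/2 as c tends to 2; so S_P(X) < 1/2 forces one of
    a, b to stay below some c < 2. *)

Definition pangle_quot {R : realFieldType} (a b : R) : R :=
  (a ^+ 2 + b ^+ 2 - 4) / (2 * a * b).

Section PangleQuotient.
Context {R : realFieldType}.
Implicit Types a b c d : R.

Lemma pangle_quotC a b : pangle_quot a b = pangle_quot b a.
Proof. by rewrite /pangle_quot [a ^+ 2 + _]addrC (mulrAC 2 a b). Qed.

Lemma pangle_quot_le_short_side a b d : 0 < a -> 0 < b -> a <= 2 -> 0 <= d ->
  2 <= a + b -> b <= 2 - 2 * d -> pangle_quot a b <= (1 - d) / 2.
Proof.
move=> a0 b0 a2 d0 ab bd; rewrite ler_pdivrMr; last by rewrite !mulr_gt0.
have h1 : 0 <= (a - 2 + b) * (2 - a) by apply: mulr_ge0; lra.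
have h2 : 0 <= (2 - a) * (2 - b) by apply: mulr_ge0; lra.
have h3 : 0 <= (a - 2 + b) * (2 - 2 * d - b) by apply: mulr_ge0; lra.
nra.
Qed.

Lemma pangle_quot_gt_long_sides a b c : 3 / 2 <= c ->
  c < a -> a <= 2 -> c < b -> b <= 2 -> c - 3 / 2 < pangle_quot a b.
Proof.
move=> c32 ca a2 cb b2; have a0 : 0 < a by lra.
have b0 : 0 < b by lra.
rewrite ltr_pdivlMr; last by rewrite !mulr_gt0.
have ha : c ^+ 2 < a ^+ 2 by rewrite ltr_pXn2r // ?nnegrE; lra.
have hb : c ^+ 2 < b ^+ 2 by rewrite ltr_pXn2r // ?nnegrE; lra.
have hab : a * b <= 4.
  have : 0 <= (2 - a) * b by apply: mulr_ge0; lra.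
  nra.
nra.
Qed.

End PangleQuotient.

Section UnitVectors.
Context {R : realType} {X : normedModType R}.
Implicit Types x y : X.

Lemma unit_normD_le2 x y : `|x| = 1 -> `|y| = 1 -> `|x + y| <= 2.
Proof. by move=> hx hy; apply: le_trans (ler_normD _ _) _; rewrite hx hy. Qed.

Lemma unit_normB_le2 x y : `|x| = 1 -> `|y| = 1 -> `|x - y| <= 2.
Proof. by move=> hx hy; apply: le_trans (ler_normB _ _) _; rewrite hx hy. Qed.

Lemma two_le_unit_normD_normB x y : `|x| = 1 -> 2 <= `|x + y| + `|x - y|.
Proof.
move=> hx; have -> : 2 = `|(x + y) + (x - y)| :> R.
  by rewrite addrACA subrr addr0 -mulr2n normrMn hx.
exact: ler_normD.
Qed.

Lemma SP_values_pangle_quot x y : `|x| = 1 -> `|y| = 1 -> x != y -> x != - y ->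
  SP_values X (pangle_quot `|x + y| `|x - y|).
Proof. by move=> hx hy nxy nxNy; exists x, y. Qed.

End UnitVectors.

Lemma ereal_sup_image_lt (R : realType) (S : set R) (r : R) :
  (ereal_sup [set t%:E | t in S] < r%:E)%E ->
  exists2 s : R, s < r & forall t, S t -> t <= s.
Proof.
have ub t : S t -> (t%:E <= ereal_sup [set t%:E | t in S])%E.
  by move=> St; apply: ereal_sup_ubound; exists t.
case: ereal_sup ub => [s | | ] ub; rewrite ?ltry ?ltNye //.
- by rewrite lte_fin => sr; exists s => // t /ub; rewrite lee_fin.
- move=> _; exists (r - 1) => [|t /ub]; first lra.
  by rewrite leeNy_eq.
Qed.

Theorem theorem5p1 (R : realType) (X : completeNormedModType R) :
  dim_ge2 X ->
  ((SP_const X < (1 / 2 : R)%:E)%E <-> uniformly_non_square X).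
Proof.
move=> _; split.
- case/ereal_sup_image_lt => s s12 SPs.
  pose c := Num.max (3 / 2) (s + 3 / 2).
  have c32 : 3 / 2 <= c by rewrite le_max lexx.
  have sc : s <= c - 3 / 2 by rewrite lerBrDr le_max lexx orbT.
  have c2 : c < 2 by rewrite gt_max; apply/andP; split; lra.
  exists ((2 - c) / 2); split; first by apply/andP; split; lra.
  move=> x y hx hy.
  have [xy_le|xy_gt] := lerP `|x - y| c; first by left; lra.
  have [xNy_le|xNy_gt] := lerP `|x + y| c; first by right; lra.
  exfalso.
  have nxy : x != y by apply: contraTneq xy_gt => ->; rewrite subrr normr0; lra.
  have nxNy : x != - y by apply: contraTneq xNy_gt => ->; rewrite addNr normr0; lra.
  have := SPs _ (SP_values_pangle_quot x y hx hy nxy nxNy).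
  have : c - 3 / 2 < pangle_quot `|x + y| `|x - y|.
    by apply: pangle_quot_gt_long_sides => //;
      [exact: unit_normD_le2 | exact: unit_normB_le2].
  lra.
- case=> d [/andP[d0 d1] short_side].
  apply: (@le_lt_trans _ _ ((1 - d) / 2)%:E); last by rewrite lte_fin; lra.
  apply: ge_ereal_sup => _ [t [x [y [hx hy nxy nxNy ->]]] <-].
  rewrite lee_fin -/(pangle_quot `|x + y| `|x - y|).
  have a0 : 0 < `|x + y| by rewrite normr_gt0 addr_eq0.
  have b0 : 0 < `|x - y| by rewrite normr_gt0 subr_eq0.
  have a2 := unit_normD_le2 x y hx hy; have b2 := unit_normB_le2 x y hx hy.
  have ab := two_le_unit_normD_normB x y hx.
  case: (short_side x y hx hy) => h.
  + by apply: (pangle_quot_le_short_side _ _ d a0 b0 a2 (ltW d0) ab); lra.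
  + rewrite pangle_quotC.
    by apply: (pangle_quot_le_short_side _ _ d b0 a0 b2 (ltW d0)); lra.
Qed.
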